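(* Let $UI(X:Y\setminus Z)$, $UI(X:Z\setminus Y)$, $SI(X:Y;Z)$ and $CI(X:Y;Z)$ be non-negative continuous real functions on $\Delta$ such that for every $P\in\Delta$: (i) $MI(X:(Y,Z)) = SI(X:Y;Z) + UI(X:Y\setminus Z) + UI(X:Z\setminus Y) + CI(X:Y;Z)$, (ii) $MI(X:Y) = SI(X:Y;Z) + UI(X:Y\setminus Z)$ and $MI(X:Z) = SI(X:Y;Z) + UI(X:Z\setminus Y)$, (all quantities evaluated at $P$), and such that (iii) $UI(X:Y\setminus Z)$ and $UI(X:Z\setminus Y)$ take the same value at any two distributions $P,P'\in\Delta$ having the same $(X,Y)$-marginal and the same $(X,Z)$-marginal. Then for every $P\in\Delta$: $UI(X:Y\setminus Z)\le \widetilde{UI}(X:Y\setminus Z)$, $UI(X:Z\setminus Y)\le \widetilde{UI}(X:Z\setminus Y)$, $SI(X:Y;Z)\ge \widetilde{SI}(X:Y;Z)$, and $CI(X:Y;Z)\ge\widetilde{CI}(X:Y;Z)$. Moreover, if for $P\in\Delta$ there exists $Q\in\Delta_P$ with $CI_Q(X:Y;Z)=0$ (i.e. $CI$ evaluated at $Q$ vanishes), then equality holds in all four inequalities at $P$. Conversely, if equality holds at $P$ in one of the four inequalities, then there exists $Q\in\Delta_P$ with $CI_Q(X:Y;Z)=0$.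
   Context: $X,Y,Z$ are random variables with finite state spaces $\mathcal X,\mathcal Y,\mathcal Z$. $\Delta$ denotes the set of all probability distributions on $\mathcal X\times\mathcal Y\times\mathcal Z$ (joint distributions of $X,Y,Z$); $P\in\Delta$ denotes the ''true'' joint distribution, and information quantities without subscript are computed w.r.t. $P$, while a subscript $Q$ (e.g. $MI_Q$, $H_Q$) means computed w.r.t. $Q\in\Delta$. For $P\in\Delta$, $\Delta_P=\{Q\in\Delta: Q(X=x,Y=y)=P(X=x,Y=y)\text{ and }Q(X=x,Z=z)=P(X=x,Z=z)\ \forall x,y,z\}$. Co-information: $CoI_Q(X;Y;Z)=MI_Q(X:Y)-MI_Q(X:Y|Z)$. Define $\widetilde{UI}(X:Y\setminus Z)=\min_{Q\in\Delta_P}MI_Q(X:Y|Z)$, $\widetilde{UI}(X:Z\setminus Y)=\min_{Q\in\Delta_P}MI_Q(X:Z|Y)$, $\widetilde{SI}(X:Y;Z)=\max_{Q\in\Delta_P}CoI_Q(X;Y;Z)$, $\widetilde{CI}(X:Y;Z)=MI(X:(Y,Z))-\min_{Q\in\Delta_P}MI_Q(X:(Y,Z))$. *)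

From Stdlib Require Import Reals ClassicalEpsilon.
From mathcomp Require Import all_boot.
Set Implicit Arguments. Unset Strict Implicit.
Open Scope R_scope.

Section Info.
Variables (X Y Z : finType).

Definition jdist := X -> Y -> Z -> R.

Definition sumX (f : X -> R) := \big[Rplus/0]_(x : X) f x.
Definition sumY (f : Y -> R) := \big[Rplus/0]_(y : Y) f y.
Definition sumZ (f : Z -> R) := \big[Rplus/0]_(z : Z) f z.

Definition inDelta (P : jdist) : Prop :=
  (forall x y z, 0 <= P x y z) /\
  sumX (fun x => sumY (fun y => sumZ (fun z => P x y z))) = 1.

Definition mXY (P : jdist) x y := sumZ (fun z => P x y z).
Definition mXZ (P : jdist) x z := sumY (fun y => P x y z).
Definition mYZ (P : jdist) y z := sumX (fun x => P x y z).
Definition mX (P : jdist) x := sumY (fun y => sumZ (fun z => P x y z)).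
Definition mY (P : jdist) y := sumX (fun x => sumZ (fun z => P x y z)).
Definition mZ (P : jdist) z := sumX (fun x => sumY (fun y => P x y z)).

Definition inDeltaP (P Q : jdist) : Prop :=
  inDelta Q /\ (forall x y, mXY Q x y = mXY P x y)
            /\ (forall x z, mXZ Q x z = mXZ P x z).

Definition eta (t : R) : R := if Rle_dec t 0 then 0 else - (t * ln t).

Definition H_XYZ (P : jdist) := sumX (fun x => sumY (fun y => sumZ (fun z => eta (P x y z)))).
Definition H_XY (P : jdist) := sumX (fun x => sumY (fun y => eta (mXY P x y))).
Definition H_XZ (P : jdist) := sumX (fun x => sumZ (fun z => eta (mXZ P x z))).
Definition H_YZ (P : jdist) := sumY (fun y => sumZ (fun z => eta (mYZ P y z))).
Definition H_X (P : jdist) := sumX (fun x => eta (mX P x)).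
Definition H_Y (P : jdist) := sumY (fun y => eta (mY P y)).
Definition H_Z (P : jdist) := sumZ (fun z => eta (mZ P z)).

Definition MI_XY (P : jdist) := H_X P + H_Y P - H_XY P.
Definition MI_XZ (P : jdist) := H_X P + H_Z P - H_XZ P.
Definition MI_X_YZ (P : jdist) := H_X P + H_YZ P - H_XYZ P.
Definition MI_XY_Z (P : jdist) := H_XZ P + H_YZ P - H_XYZ P - H_Z P.
Definition MI_XZ_Y (P : jdist) := H_XY P + H_YZ P - H_XYZ P - H_Y P.

Definition CoI (P : jdist) := MI_XY P - MI_XY_Z P.

Definition continuous_on_Delta (F : jdist -> R) : Prop :=
  forall P, inDelta P -> forall eps, 0 < eps -> exists delta, 0 < delta /\
    forall Q, inDelta Q -> (forall x y z, Rabs (Q x y z - P x y z) < delta) ->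
      Rabs (F Q - F P) < eps.

End Info.

Definition is_inf (E : R -> Prop) (m : R) : Prop :=
  (forall v, E v -> m <= v) /\ (forall b, (forall v, E v -> b <= v) -> b <= m).
Definition is_sup (E : R -> Prop) (m : R) : Prop :=
  (forall v, E v -> v <= m) /\ (forall b, (forall v, E v -> v <= b) -> m <= b).
Definition Inf (E : R -> Prop) : R := epsilon (inhabits 0) (is_inf E).
Definition Sup (E : R -> Prop) : R := epsilon (inhabits 0) (is_sup E).

(* min / max over Delta_P (attained, hence equal to inf / sup) *)
Definition minDeltaP X Y Z (P : jdist X Y Z) (F : jdist X Y Z -> R) : R :=
  Inf (fun v => exists Q, inDeltaP P Q /\ v = F Q).
Definition maxDeltaP X Y Z (P : jdist X Y Z) (F : jdist X Y Z -> R) : R :=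
  Sup (fun v => exists Q, inDeltaP P Q /\ v = F Q).

Definition UIt_Y X Y Z (P : jdist X Y Z) := minDeltaP P (@MI_XY_Z X Y Z).
Definition UIt_Z X Y Z (P : jdist X Y Z) := minDeltaP P (@MI_XZ_Y X Y Z).
Definition SIt X Y Z (P : jdist X Y Z) := maxDeltaP P (@CoI X Y Z).
Definition CIt X Y Z (P : jdist X Y Z) := MI_X_YZ P - minDeltaP P (@MI_X_YZ X Y Z).

(* Fix P in Delta and write s for the infimum of CI over Delta_P.  For Q in
   Delta_P, axiom (iii) gives UI(Y\Z)(Q) = UI(Y\Z)(P) and UI(Z\Y)(Q) = UI(Z\Y)(P),
   and MI(X:Y), MI(X:Z) only depend on the shared marginals; so axioms (i),(ii)
   and the chain rule show that on Delta_P
     MI_Q(X:Y|Z) = UI(Y\Z)(P) + CI(Q),     MI_Q(X:Z|Y) = UI(Z\Y)(P) + CI(Q),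
     CoI_Q       = SI(P) - CI(Q),          MI_Q(X:(Y,Z)) = const + CI(Q).
   Minimising (or maximising) over Delta_P therefore yields
     UIt = UI + s,   SIt = SI - s,   CIt = CI - s,
   and the theorem reduces to 0 <= s <= CI(P), with s = 0 iff CI vanishes
   somewhere on Delta_P.  The only analytic input is that a continuous function
   attains its infimum on the compact set Delta_P, which we prove by extracting
   a convergent subsequence (Bolzano-Weierstrass coordinatewise). *)

From Pilot Require Import Defs.
From HB Require Import structures.
From Stdlib Require Import Reals Lra Lia ClassicalEpsilon Classical.
From mathcomp Require Import all_boot.
Open Scope R_scope.
Set Implicit Arguments. Unset Strict Implicit.

(* Real addition as a commutative monoid law, so that the bigop lemmas apply
   to the sums. *)
HB.instance Definition _ := Monoid.isComLaw.Build R 0 Rplus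
  (fun a b c => esym (Rplus_assoc a b c)) Rplus_comm Rplus_0_l.

(* The set of values of F on the domain D; minDeltaP P F and maxDeltaP P F
   are the infimum and supremum of image (inDeltaP P) F. *)
Definition image (T : Type) (D : T -> Prop) (F : T -> R) : R -> Prop :=
  fun v => exists t, D t /\ v = F t.

Lemma Inf_correct (E : R -> Prop) :
  (exists v, E v) -> (exists b, forall v, E v -> b <= v) -> is_inf E (Inf E).
Proof.
move=> [v0 Ev0] [b Hb]; rewrite /Inf; apply: epsilon_spec.
have [m [Hub Hlub]] : {m : R | is_lub (fun w => E (- w)) m}.
  apply: completeness.
  - by exists (- b) => w /Hb; lra.
  - by exists (- v0); rewrite Ropp_involutive.
exists (- m); split.
- move=> v Ev; have : - v <= m by apply: Hub; rewrite Ropp_involutive.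
  lra.
- move=> c Hc; have : m <= - c by apply: Hlub => w /Hc; lra.
  lra.
Qed.

Lemma Sup_correct (E : R -> Prop) :
  (exists v, E v) -> (exists b, forall v, E v -> v <= b) -> is_sup E (Sup E).
Proof.
move=> [v0 Ev0] [b Hb]; rewrite /Sup; apply: epsilon_spec.
have [m [Hub Hlub]] : {m : R | is_lub E m} by apply: completeness; [exists b | exists v0].
by exists m.
Qed.

Lemma is_inf_unique E a b : is_inf E a -> is_inf E b -> a = b.
Proof. by move=> [a1 a2] [b1 b2]; apply: Rle_antisym; [apply: b2 a1 | apply: a2 b1]. Qed.

Lemma is_sup_unique E a b : is_sup E a -> is_sup E b -> a = b.
Proof. by move=> [a1 a2] [b1 b2]; apply: Rle_antisym; [apply: a2 b1 | apply: b2 a1]. Qed.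

Lemma Inf_image_shift (T : Type) (D : T -> Prop) (F G : T -> R) c s :
  (exists t, D t) -> (forall t, D t -> F t = c + G t) ->
  is_inf (image D G) s -> Inf (image D F) = c + s.
Proof.
move=> [t0 Dt0] HF [Hlow Hgreat].
have Hinf : is_inf (image D F) (c + s).
  split.
  - move=> _ [t [Dt ->]]; rewrite HF //.
    have : s <= G t by apply: Hlow; exists t.
    lra.
  - move=> b Hb; suff : b - c <= s by lra.
    apply: Hgreat => _ [t [Dt ->]].
    have : b <= F t by apply: Hb; exists t.
    rewrite HF //; lra.
apply: (is_inf_unique _ Hinf); apply: Inf_correct; first by exists (F t0), t0.
by exists (c + s); case: Hinf.
Qed.

Lemma Sup_image_shift (T : Type) (D : T -> Prop) (F G : T -> R) c s :
  (exists t, D t) -> (forall t, D t -> F t = c - G t) ->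
  is_inf (image D G) s -> Sup (image D F) = c - s.
Proof.
move=> [t0 Dt0] HF [Hlow Hgreat].
have Hsup : is_sup (image D F) (c - s).
  split.
  - move=> _ [t [Dt ->]]; rewrite HF //.
    have : s <= G t by apply: Hlow; exists t.
    lra.
  - move=> b Hb; suff : c - b <= s by lra.
    apply: Hgreat => _ [t [Dt ->]].
    have : F t <= b by apply: Hb; exists t.
    rewrite HF //; lra.
apply: (is_sup_unique _ Hsup); apply: Sup_correct; first by exists (F t0), t0.
by exists (c - s); case: Hsup.
Qed.

Definition increasing (phi : nat -> nat) : Prop := forall n, (phi n < phi n.+1)%N.

Lemma increasing_ge phi : increasing phi -> forall n, (n <= phi n)%N.
Proof. by move=> Hphi; elim=> [|n IH] //; exact: leq_ltn_trans IH (Hphi n). Qed.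

Lemma increasing_comp phi psi :
  increasing phi -> increasing psi -> increasing (fun n => phi (psi n)).
Proof. by move=> Hphi Hpsi n; apply: (homo_ltn ltn_trans Hphi). Qed.

Lemma inv_succ_pos (n : nat) : 0 < / INR n.+1.
Proof. by apply: Rinv_0_lt_compat; apply: lt_0_INR; lia. Qed.

Lemma inv_succ_le (k N : nat) : (0 < N)%N -> (N <= k.+1)%N -> / INR k.+1 <= / INR N.
Proof.
move=> /ltP HN /leP HNk; apply: Rinv_le_contravar; [exact: lt_0_INR | exact: le_INR].
Qed.

(* Bolzano-Weierstrass with an explicit subsequence: a bounded real sequence
   has a convergent subsequence (Stdlib only provides a cluster point). *)
Lemma bounded_subseq (v : nat -> R) (a b : R) : (forall n, a <= v n <= b) ->
  exists psi, increasing psi /\ exists l, Un_cv (fun n => v (psi n)) l.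
Proof.
move=> Hv.
have [l Hl] := Bolzano_Weierstrass v (fun c => a <= c <= b) (compact_P3 a b) Hv.
have Hclose k m : exists p, (m <= p)%N /\ Rabs (v p - l) < / INR k.+1.
  pose e := mkposreal _ (inv_succ_pos k).
  have [p [/leP Hmp Hp]] := Hl (disc l e) m (ex_intro _ e (fun y Hy => Hy)).
  by exists p.
have [g Hg] := choice (fun km p => (km.2 <= p)%N /\ Rabs (v p - l) < / INR km.1.+1)
  (fun km => Hclose km.1 km.2).
pose psi := fix psi n := if n is n'.+1 then g (n, (psi n').+1) else g (0%N, 0%N).
have Hpsi n : Rabs (v (psi n) - l) < / INR n.+1 by case: n => [|n] /=; exact: (proj2 (Hg (_, _))).
exists psi; split; first by move=> n /=; exact: (proj1 (Hg (_, _))).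
exists l => eps Heps.
have [N [HN1 HN2]] := archimed_cor1 eps Heps.
exists N => n /leP Hn; rewrite /R_dist.
have := inv_succ_le (introT ltP HN2) (leqW Hn); have := Hpsi n; lra.
Qed.

Definition unif_conv (T : Type) (u : nat -> T -> R) (L : T -> R) : Prop :=
  forall eps, 0 < eps -> exists N, forall n, (N <= n)%N ->
    forall t, Rabs (u n t - L t) < eps.

(* Bolzano-Weierstrass in R^T for a finite type T, by extracting successive
   subsequences along an enumeration of T. *)
Lemma finite_bounded_subseq (T : finType) (u : nat -> T -> R) (b : T -> R) :
  (forall n t, 0 <= u n t <= b t) ->
  exists phi, increasing phi /\ exists L, unif_conv (fun n => u (phi n)) L.
Proof.
move=> Hu.
suff [phi [Hphi [L HL]]] : exists phi, increasing phi /\ exists L : T -> R,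
    forall eps, 0 < eps -> exists N, forall n, (N <= n)%N ->
      forall t, t \in enum T -> Rabs (u (phi n) t - L t) < eps.
  exists phi; split => //; exists L => eps /HL [N HN].
  by exists N => n Hn t; apply: HN => //; rewrite mem_enum.
elim: (enum T) => [|a l [phi [Hphi [L HL]]]].
  by exists id; split=> //; exists (fun _ => 0) => eps _; exists 0%N.
have [psi [Hpsi [c Hc]]] := @bounded_subseq (fun n => u (phi n) a) 0 (b a) (fun n => Hu _ _).
exists (fun n => phi (psi n)); split; first exact: increasing_comp.
exists (fun t => if t == a then c else L t) => eps Heps.
have [N1 HN1] := HL eps Heps.
have [N2 HN2] := Hc eps Heps.
exists (maxn N1 N2) => n; rewrite geq_max => /andP [H1 H2] t.
rewrite in_cons; case: eqP => [-> _ | _ /= Htl].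
  by have := HN2 n (elimT leP H2).
apply: HN1 Htl; exact: leq_trans H1 (increasing_ge Hpsi n).
Qed.

Lemma approx_nonneg r :
  (forall d, 0 < d -> exists v, 0 <= v /\ Rabs (v - r) < d) -> 0 <= r.
Proof.
move=> H; apply: Rnot_lt_le => Hr.
have [v [Hv /Rabs_def2 Hvr]] := H (- r) ltac:(lra).
lra.
Qed.

Lemma sum_close (T : finType) (f g : T -> R) d : (forall t, Rabs (f t - g t) <= d) ->
  Rabs (\big[Rplus/0]_t f t - \big[Rplus/0]_t g t) <= d * \big[Rplus/0]_(t : T) 1.
Proof.
move=> H; apply: (big_rec3 (fun a b c => Rabs (a - b) <= d * c)).
  by rewrite Rminus_0_r Rabs_R0 Rmult_0_r; lra.
move=> t a b' c _ Hc.
replace (f t + a - (g t + b')) with ((f t - g t) + (a - b')) by ring.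
apply: Rle_trans (Rabs_triang _ _) _; have := H t; lra.
Qed.

Lemma approx_sum_const (T : finType) (L : T -> R) c :
  (forall d, 0 < d -> exists f : T -> R, \big[Rplus/0]_t f t = c /\
     forall t, Rabs (f t - L t) < d) ->
  \big[Rplus/0]_t L t = c.
Proof.
move=> H; set C := \big[Rplus/0]_(t : T) 1.
have HC : 0 <= C by apply: big_ind => *; lra.
apply: Rminus_diag_uniq; apply: NNPP => Hne.
set r := Rabs (\big[Rplus/0]_t L t - c).
have Hr : 0 < r := Rabs_pos_lt _ Hne.
have Hd : 0 < r / (C + 1) by apply: Rdiv_lt_0_compat; lra.
have [f [Hfc Hf]] := H _ Hd.
have := sum_close (fun t => Rlt_le _ _ (Hf t)).
rewrite Hfc Rabs_minus_sym -/r.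
have -> : r / (C + 1) * C = r - r / (C + 1) by field; lra.
lra.
Qed.

Section Compactness.
Variables (X Y Z : finType).
Implicit Types (P Q : jdist X Y Z) (F : jdist X Y Z -> R).

Definition jconv (Qn : nat -> jdist X Y Z) (Q : jdist X Y Z) : Prop :=
  forall eps, 0 < eps -> exists N, forall n, (N <= n)%N ->
    forall x y z, Rabs (Qn n x y z - Q x y z) < eps.

Lemma DeltaP_seq_compact P (Qn : nat -> jdist X Y Z) :
  (forall n, inDeltaP P (Qn n)) ->
  exists phi, increasing phi /\ exists Q, inDeltaP P Q /\ jconv (fun n => Qn (phi n)) Q.
Proof.
move=> HQn.
pose u n (t : X * Y * Z) := Qn n t.1.1 t.1.2 t.2.
have Hu n t : 0 <= u n t <= mXY P t.1.1 t.1.2.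
  rewrite /u; case: t => [[x y] z] /=; have [[Hnn _] [HXY _]] := HQn n.
  split; first exact: Hnn.
  rewrite -HXY /mXY /sumZ (bigD1 z) //=.
  suff : 0 <= \big[Rplus/0]_(j | j != z) Qn n x y j by lra.
  by apply: big_ind => [|a b *|j _]; [lra | lra | exact: Hnn].
have [phi [Hphi [L HL]]] := finite_bounded_subseq Hu.
pose Q : jdist X Y Z := fun x y z => L (x, y, z).
have Hconv : jconv (fun n => Qn (phi n)) Q.
  by move=> eps /HL [N HN]; exists N => n Hn x y z; apply: (HN n Hn (x, y, z)).
have Hnn x y z : 0 <= Q x y z.
  apply: approx_nonneg => d /Hconv [N /(_ N (leqnn N)) HN].
  by exists (Qn (phi N) x y z); split; [case: (HQn (phi N)) => [[]] | exact: HN].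
have HXY x y : mXY Q x y = mXY P x y.
  apply: approx_sum_const => d /Hconv [N /(_ N (leqnn N)) HN].
  by exists (fun z => Qn (phi N) x y z); split; [exact: (proj1 (proj2 (HQn _))) | exact: HN].
have HXZ x z : mXZ Q x z = mXZ P x z.
  apply: approx_sum_const => d /Hconv [N /(_ N (leqnn N)) HN].
  by exists (fun y => Qn (phi N) x y z); split; [exact: (proj2 (proj2 (HQn _))) | move=> y; exact: (HN x y z)].
exists phi; split => //; exists Q; split => //; split => //; split => //.
have [[_ <-] [HXY0 _]] := HQn 0%N.
by apply: eq_bigr => x _; apply: eq_bigr => y _; exact: (etrans (HXY x y) (esym (HXY0 x y))).
Qed.

Lemma continuous_inf_attained P F m : continuous_on_Delta F ->
  is_inf (image (inDeltaP P) F) m -> exists Q, inDeltaP P Q /\ F Q = m.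
Proof.
move=> cF [Hlow Hgreat].
have Hnear n : exists Q, inDeltaP P Q /\ F Q < m + / INR n.+1.
  apply: NNPP => Hn; have := inv_succ_pos n.
  suff : m + / INR n.+1 <= m by lra.
  apply: Hgreat => _ [Q [HQ ->]]; apply: Rnot_lt_le => HQm; apply: Hn; by exists Q.
have [Qn HQn] := choice _ Hnear.
have [phi [Hphi [Q [HQ Hconv]]]] := DeltaP_seq_compact (fun n => proj1 (HQn n)).
exists Q; split => //.
have HmQ : m <= F Q by apply: Hlow; exists Q.
apply: Rle_antisym => //; apply: Rnot_lt_le => HQm.
have [delta [Hdelta HF]] := cF Q (proj1 HQ) ((F Q - m) / 2) ltac:(lra).
have [N HN] := Hconv delta Hdelta.
have [M [HM1 HM2]] := archimed_cor1 ((F Q - m) / 2) ltac:(lra).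
pose n := maxn N M.
have HMn : (M <= (phi n).+1)%N.
  by apply: leqW; apply: leq_trans (increasing_ge Hphi n); exact: leq_maxr.
have [[HDn _] Hn] := HQn (phi n).
have /Rabs_def2 := HF _ HDn (HN n (leq_maxl _ _)).
have := inv_succ_le (introT ltP HM2) HMn.
lra.
Qed.

End Compactness.

Section Information.
Variables (X Y Z : finType).
Implicit Types P Q : jdist X Y Z.

Lemma MI_XY_marginal P Q : (forall x y, mXY Q x y = mXY P x y) -> MI_XY Q = MI_XY P.
Proof.
move=> e; rewrite /MI_XY /H_X /H_Y /H_XY /mX /mY /sumX /sumY.
congr (_ + _ - _).
- by apply: eq_bigr => x _; congr Defs.eta; apply: eq_bigr => y _; exact: e.
- by apply: eq_bigr => y _; congr Defs.eta; apply: eq_bigr => x _; exact: e.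
- by apply: eq_bigr => x _; apply: eq_bigr => y _; rewrite e.
Qed.

Lemma MI_XZ_marginal P Q : (forall x z, mXZ Q x z = mXZ P x z) -> MI_XZ Q = MI_XZ P.
Proof.
move=> e; rewrite /MI_XZ /H_X /H_Z /H_XZ /mX /mZ /sumX /sumY /sumZ.
congr (_ + _ - _).
- apply: eq_bigr => x _; congr Defs.eta.
  by rewrite exchange_big [RHS]exchange_big /=; apply: eq_bigr => z _; exact: e.
- by apply: eq_bigr => z _; congr Defs.eta; apply: eq_bigr => x _; exact: e.
- by apply: eq_bigr => x _; apply: eq_bigr => z _; rewrite e.
Qed.

Lemma chain_rule Q :
  MI_X_YZ Q = MI_XZ Q + MI_XY_Z Q /\ MI_X_YZ Q = MI_XY Q + MI_XZ_Y Q.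
Proof. by rewrite /MI_X_YZ /MI_XZ /MI_XY_Z /MI_XY /MI_XZ_Y; split; ring. Qed.

End Information.

Section Decomposition.
Variables (X Y Z : finType) (UIY UIZ SI CI : jdist X Y Z -> R).
Hypothesis nnCI : forall P, inDelta P -> 0 <= CI P.
Hypothesis h_i : forall P, inDelta P -> MI_X_YZ P = SI P + UIY P + UIZ P + CI P.
Hypothesis h_iiY : forall P, inDelta P -> MI_XY P = SI P + UIY P.
Hypothesis h_iiZ : forall P, inDelta P -> MI_XZ P = SI P + UIZ P.
Hypothesis h_iii : forall P P', inDelta P -> inDelta P' ->
  (forall x y, mXY P x y = mXY P' x y) -> (forall x z, mXZ P x z = mXZ P' x z) ->
  UIY P = UIY P' /\ UIZ P = UIZ P'.
Variable P : jdist X Y Z.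
Hypothesis HP : inDelta P.

Lemma decomposition_on_DeltaP Q : inDeltaP P Q ->
  [/\ MI_XY_Z Q = UIY P + CI Q, MI_XZ_Y Q = UIZ P + CI Q,
      CoI Q = SI P - CI Q & MI_X_YZ Q = (SI P + UIY P + UIZ P) + CI Q].
Proof.
move=> [HQ [HXY HXZ]].
have [eY eZ] := h_iii HQ HP HXY HXZ.
have [cZ cY] := chain_rule Q.
have := MI_XY_marginal HXY; have := MI_XZ_marginal HXZ.
have := h_i HQ; have := h_iiY HQ; have := h_iiZ HQ; have := h_iiY HP; have := h_iiZ HP.
rewrite /CoI; split; lra.
Qed.

Let s := Inf (image (inDeltaP P) CI).

(* s is the infimum of CI over Delta_P (CI >= 0 and P lies in Delta_P). *)
Lemma CI_inf : is_inf (image (inDeltaP P) CI) s.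
Proof.
apply: Inf_correct; first by exists (CI P), P.
by exists 0 => _ [Q [[HQ _] ->]]; exact: nnCI.
Qed.

Lemma tilde_measures :
  [/\ UIt_Y P = UIY P + s, UIt_Z P = UIZ P + s, SIt P = SI P - s & CIt P = CI P - s].
Proof.
have Hne : exists Q, inDeltaP P Q by exists P.
have HD Q (HQ : inDeltaP P Q) := decomposition_on_DeltaP HQ.
split.
- by apply: (Inf_image_shift Hne _ CI_inf) => Q /HD [].
- by apply: (Inf_image_shift Hne _ CI_inf) => Q /HD [].
- by apply: (Sup_image_shift Hne _ CI_inf) => Q /HD [].
- have Hmin : minDeltaP P (@MI_X_YZ X Y Z) = (SI P + UIY P + UIZ P) + s.
    by apply: (Inf_image_shift Hne _ CI_inf) => Q /HD [].
  by rewrite /CIt Hmin h_i //; ring.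
Qed.

End Decomposition.
Unset Implicit Arguments. Set Strict Implicit.

Theorem mainTheorem1 (X Y Z : finType)
  (UIY UIZ SI CI : jdist X Y Z -> R)
  (nnUIY : forall P, inDelta P -> 0 <= UIY P)
  (nnUIZ : forall P, inDelta P -> 0 <= UIZ P)
  (nnSI : forall P, inDelta P -> 0 <= SI P)
  (nnCI : forall P, inDelta P -> 0 <= CI P)
  (cUIY : continuous_on_Delta UIY) (cUIZ : continuous_on_Delta UIZ)
  (cSI : continuous_on_Delta SI) (cCI : continuous_on_Delta CI)
  (h_i : forall P, inDelta P -> MI_X_YZ P = SI P + UIY P + UIZ P + CI P)
  (h_iiY : forall P, inDelta P -> MI_XY P = SI P + UIY P)
  (h_iiZ : forall P, inDelta P -> MI_XZ P = SI P + UIZ P)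
  (h_iii : forall P P', inDelta P -> inDelta P' ->
     (forall x y, mXY P x y = mXY P' x y) -> (forall x z, mXZ P x z = mXZ P' x z) ->
     UIY P = UIY P' /\ UIZ P = UIZ P') :
  forall P, inDelta P ->
    (UIY P <= UIt_Y P /\ UIZ P <= UIt_Z P /\ SI P >= SIt P /\ CI P >= CIt P) /\
    ((exists Q, inDeltaP P Q /\ CI Q = 0) ->
       UIY P = UIt_Y P /\ UIZ P = UIt_Z P /\ SI P = SIt P /\ CI P = CIt P) /\
    ((UIY P = UIt_Y P \/ UIZ P = UIt_Z P \/ SI P = SIt P \/ CI P = CIt P) ->
       exists Q, inDeltaP P Q /\ CI Q = 0).
Proof.
move=> P HP.
have [-> -> -> ->] := tilde_measures nnCI h_i h_iiY h_iiZ h_iii HP.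
have [Hlow Hgreat] := CI_inf nnCI HP.
set s := Inf _ in Hlow Hgreat *.
(* s >= 0 gives the inequalities; s = 0 as soon as CI vanishes on Delta_P. *)
have s_ge0 : 0 <= s by apply: Hgreat => _ [Q [[HQ _] ->]]; exact: nnCI.
split; first by repeat split; lra.
split.
  move=> [Q [HQ HQ0]]; have : s <= CI Q by apply: Hlow; exists Q.
  by repeat split; lra.
(* Equality forces s = 0, and s is attained by the compactness of Delta_P. *)
move=> Heq; have s0 : s = 0 by case: Heq => [|[|[|]]]; lra.
apply: (continuous_inf_attained cCI); rewrite -s0; exact: (conj Hlow Hgreat).
Qed.
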